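(* Let $G$ be a finite simple connected graph and $w$ a non-negative real function on the edges of $G$. Let $d_s$ be the shortest-path distance on the vertices of $G$, and define $\pi(u,u)=0$ and, for distinct vertices $u,v$, \[\pi(u,v) = \min\left\{ \frac{p(\gamma)}{p(\gamma)+1} : \gamma \text{ is a shortest path between } u \text{ and } v\right\},\] where $p(\gamma) = \prod_{e \in \gamma} w(e)$ is the product of the weights of the edges of $\gamma$. Then $d^{\pi}_w := d_s + \pi$ is a metric on the vertex set of $G$. *)

From HB Require Import structures.
From mathcomp Require Import all_boot all_order all_algebra.
Set Implicit Arguments. Unset Strict Implicit. Unset Printing Implicit Defensive.
Import Order.TTheory GRing.Theory Num.Theory.
Local Open Scope ring_scope.

Section Graph.
Variables (T : finType) (e : rel T).

Definition simple_graph := irreflexive e /\ symmetric e.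
Definition connected_graph := forall u v : T, connect e u v.

(* a walk from u to v with vertex sequence u :: t (size t = number of edges) *)
Definition is_walk (u : T) (t : seq T) (v : T) : bool :=
  path e u t && (last u t == v).

(* shortest-path distance: least number of edges of a walk from u to v
   (in a connected graph it is < #|T|; the search range is iota 0 #|T|.+1) *)
Definition dist_s (u v : T) : nat :=
  find (fun n => [exists t : n.-tuple T, is_walk u t v]) (iota 0 #|T|.+1).

Definition shortest_path (u v : T) (t : seq T) : bool :=
  is_walk u t v && (size t == dist_s u v).

Variable R : realFieldType.
(* edge weights: a function on (unordered) edges {u,v} *)
Variable w : {set T} -> R.

Definition path_weight (u : T) (t : seq T) : R :=
  \prod_(x <- pairmap (fun a b => w [set a; b]) u t) x.

(* pi(u,u) = 0; otherwise the minimum of p/(p+1) over all shortest paths.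
   All the values lie in [0,1), so the neutral element 1 of the min
   is irrelevant as soon as a shortest path exists. *)
Definition pi_w (u v : T) : R :=
  if u == v then 0 else
  \big[Num.min/1]_(t : (dist_s u v).-tuple T | shortest_path u v t)
     (path_weight u t / (path_weight u t + 1)).

Definition d_pi (u v : T) : R := (dist_s u v)%:R + pi_w u v.

End Graph.

Definition is_metric (T : Type) (R : realFieldType) (d : T -> T -> R) : Prop :=
  [/\ forall x y, 0 <= d x y,
      forall x y, d x y = 0 <-> x = y,
      forall x y, d x y = d y x &
      forall x y z, d x z <= d x y + d y z].

From HB Require Import structures.
From mathcomp Require Import all_boot all_order all_algebra.
From mathcomp Require Import ring lra.
Set Implicit Arguments. Unset Strict Implicit. Unset Printing Implicit Defensive.
Import Order.TTheory GRing.Theory Num.Theory.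
Local Open Scope ring_scope.

(** The shortest-path distance [d_s] is an integer-valued metric, while [pi]
  takes values in [0, 1) and vanishes exactly on the diagonal.  Hence the
  triangle inequality for [d_s + pi] is automatic whenever
  [d_s(x,z) < d_s(x,y) + d_s(y,z)].  In the remaining case [y] lies on a
  geodesic from [x] to [z]: gluing optimal shortest paths [x -> y] and
  [y -> z] gives a shortest path [x -> z] whose weight is the product of
  theirs, and [ab/(ab+1) <= a/(a+1) + b/(b+1)] for [a, b >= 0] yields
  [pi(x,z) <= pi(x,y) + pi(y,z)].  Symmetry of [pi] follows by reversing
  paths. *)

Lemma last_rev_belast (T : Type) (x : T) s : last (last x s) (rev (belast x s)) = x.
Proof. by case: s => //= y s; rewrite rev_cons last_rcons. Qed.

Lemma rev_pairmap (T U : Type) (f : T -> T -> U) x s :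
  rev (pairmap f x s) = pairmap (fun a b => f b a) (last x s) (rev (belast x s)).
Proof.
elim: s x => //= y s IHs x.
by rewrite rev_cons IHs rev_cons -!cats1 pairmap_cat last_rev_belast.
Qed.

Section Walks.
Variables (T : finType) (e : rel T).

Lemma is_walk_cat x y z s1 s2 :
  is_walk e x s1 y -> is_walk e y s2 z -> is_walk e x (s1 ++ s2) z.
Proof.
rewrite /is_walk => /andP[p1 /eqP l1] /andP[p2 /eqP l2].
by rewrite cat_path last_cat l1 p1 p2 /= l2 eqxx.
Qed.

Lemma is_walk_rev x y s : symmetric e ->
  is_walk e x s y -> is_walk e y (rev (belast x s)) x.
Proof.
move=> sym_e /andP[p /eqP <-].
rewrite /is_walk rev_path last_rev_belast eqxx andbT.
by rewrite (@eq_path _ _ e) // => a b /=; rewrite sym_e.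
Qed.

Lemma dist_s_le x y s : is_walk e x s y -> (dist_s e x y <= size s)%N.
Proof.
move=> walk_s; rewrite /dist_s.
have [small|large] := ltnP (size s) #|T|.+1; last first.
  by apply: leq_trans (find_size _ _) _; rewrite size_iota.
rewrite leqNgt; apply/negP => /(before_find 0%N).
rewrite nth_iota // add0n => /negbT/negP; apply.
by apply/existsP; exists (in_tuple s).
Qed.

Lemma dist_ss x : dist_s e x x = 0%N.
Proof. by apply/eqP; rewrite -leqn0 (@dist_s_le _ _ [::]) //= /is_walk /= eqxx. Qed.

Hypothesis conn_e : connected_graph e.

(* Removing the loops of a walk given by [connect] leaves fewer than [#|T|]
   edges, inside the search range of [dist_s]. *)
Lemma shortest_walk_exists x y :
  exists2 s, is_walk e x s y & size s = dist_s e x y.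
Proof.
have /connectP[p0 p0_path p0_last] := conn_e x y.
case: (shortenP p0_path) p0_last => p p_path p_uniq _ p_last.
pose has_walk n := [exists s : n.-tuple T, is_walk e x s y].
have p_small : (size p < #|T|.+1)%N.
  by have := max_card (mem (x :: p)); rewrite (card_uniqP p_uniq) => /leqW.
have found : has has_walk (iota 0 #|T|.+1).
  apply/hasP; exists (size p); first by rewrite mem_iota.
  by apply/existsP; exists (in_tuple p); rewrite /is_walk p_path -p_last eqxx.
have := nth_find 0%N found; rewrite has_find size_iota in found.
rewrite nth_iota // add0n => /existsP[s walk_s].
by exists s; rewrite ?size_tuple.
Qed.

Lemma dist_s_eq0 x y : dist_s e x y = 0%N -> x = y.
Proof.
move=> dist0; have [s walk_s] := shortest_walk_exists x y.
by rewrite dist0 => /size0nil s0; move: walk_s; rewrite s0 /is_walk /= => /eqP.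
Qed.

Lemma dist_sC x y : symmetric e -> dist_s e x y = dist_s e y x.
Proof.
move=> sym_e; suff le_dist a b : (dist_s e a b <= dist_s e b a)%N.
  by apply/eqP; rewrite eqn_leq !le_dist.
have [s walk_s <-] := shortest_walk_exists b a.
by rewrite -(size_belast b s) -size_rev dist_s_le // is_walk_rev.
Qed.

End Walks.

Section PathWeight.
Variables (T : finType) (R : realFieldType) (w : {set T} -> R).

Lemma path_weight_ge0 (e : rel T) x s :
  (forall a b, e a b -> 0 <= w [set a; b]) -> path e x s -> 0 <= path_weight w x s.
Proof.
move=> w_ge0; elim: s x => [|y s IHs] x /=; first by rewrite /path_weight big_nil.
by case/andP=> exy ys; rewrite /path_weight big_cons mulr_ge0 ?w_ge0 ?IHs.
Qed.

Lemma path_weight_cat x s1 s2 :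
  path_weight w x (s1 ++ s2) = path_weight w x s1 * path_weight w (last x s1) s2.
Proof. by rewrite /path_weight pairmap_cat big_cat. Qed.

Lemma path_weight_rev x s :
  path_weight w (last x s) (rev (belast x s)) = path_weight w x s.
Proof.
rewrite /path_weight -rev_pairmap big_rev; apply: congr_big => //.
by elim: s x => //= y s IHs x; rewrite setUC IHs.
Qed.

End PathWeight.

Section DivAddr1.
Variable R : realFieldType.
Implicit Types a b : R.

Lemma div_addr1_ge0 a : 0 <= a -> 0 <= a / (a + 1).
Proof. by move=> a_ge0; rewrite divr_ge0 // addr_ge0. Qed.

Lemma div_addr1_le1 a : 0 <= a -> a / (a + 1) <= 1.
Proof. by move=> a_ge0; rewrite ler_pdivrMr; lra. Qed.

Lemma div_addr1M_le a b : 0 <= a -> 0 <= b ->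
  (a * b) / (a * b + 1) <= a / (a + 1) + b / (b + 1).
Proof.
move=> a_ge0 b_ge0; have ab_ge0 : 0 <= a * b by rewrite mulr_ge0.
have [a1 b1 ab1] : [/\ a + 1 != 0, b + 1 != 0 & a * b + 1 != 0].
  by split; rewrite lt0r_neq0 //; lra.
rewrite -subr_ge0.
(* The difference is a fraction of polynomials with nonnegative coefficients. *)
have -> : a / (a + 1) + b / (b + 1) - a * b / (a * b + 1) =
    (a ^+ 2 * b ^+ 2 + a * b + a + b) / ((a + 1) * (b + 1) * (a * b + 1)).
  by field; rewrite a1 b1 ab1.
by rewrite divr_ge0 ?mulr_ge0 ?addr_ge0 ?exprn_ge0 ?mulr_ge0.
Qed.

End DivAddr1.

Section PathMetric.
Variables (T : finType) (e : rel T) (R : realFieldType) (w : {set T} -> R).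
Hypothesis w_ge0 : forall x y, e x y -> 0 <= w [set x; y].
Hypothesis conn_e : connected_graph e.

Lemma pi_w_ge0 x y : 0 <= pi_w e w x y.
Proof.
rewrite /pi_w; case: eqP => // _; apply/bigmin_geP; split=> // s.
by case/andP=> /andP[s_path _] _; rewrite div_addr1_ge0 // (path_weight_ge0 w_ge0).
Qed.

Lemma pi_w_le1 x y : pi_w e w x y <= 1.
Proof. by rewrite /pi_w; case: eqP => // _; apply: bigmin_le_id. Qed.

Lemma pi_w_le_shortest x y s : x != y -> is_walk e x s y -> size s = dist_s e x y ->
  pi_w e w x y <= path_weight w x s / (path_weight w x s + 1).
Proof.
move=> /negbTE neq_xy walk_s /eqP size_s; rewrite /pi_w neq_xy.
have s_shortest : shortest_path e x y (Tuple size_s).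
  by rewrite /shortest_path walk_s size_s.
exact: (bigmin_le_cond _
  (fun t : (dist_s e x y).-tuple T => path_weight w x t / (path_weight w x t + 1))
  s_shortest).
Qed.

Lemma pi_w_attained x y : x != y ->
  exists2 s, is_walk e x s y /\ size s = dist_s e x y &
    pi_w e w x y = path_weight w x s / (path_weight w x s + 1).
Proof.
move=> /negbTE neq_xy; rewrite /pi_w neq_xy.
have [s0 walk_s0 /eqP size_s0] := shortest_walk_exists conn_e x y.
have s0_shortest : shortest_path e x y (Tuple size_s0).
  by rewrite /shortest_path walk_s0 size_s0.
have ratio_le1 (t : (dist_s e x y).-tuple T) : shortest_path e x y t ->
    path_weight w x t / (path_weight w x t + 1) <= 1.
  by case/andP=> /andP[t_path _] _; rewrite div_addr1_le1 // (path_weight_ge0 w_ge0).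
have [s] := eq_bigmin _ (fun t : (dist_s e x y).-tuple T => shortest_path e x y t) _
  s0_shortest ratio_le1.
by move=> /andP[walk_s /eqP size_s] ->; exists s.
Qed.

Lemma pi_wC x y : symmetric e -> pi_w e w x y = pi_w e w y x.
Proof.
move=> sym_e; suff le_pi a b : pi_w e w a b <= pi_w e w b a.
  by apply/le_anti; rewrite !le_pi.
have [<-|neq_ab] := eqVneq a b; first by [].
have neq_ba : b != a by rewrite eq_sym.
have [s [walk_s size_s] ->] := pi_w_attained neq_ba.
have s_last : last b s = a by case/andP: walk_s => _ /eqP.
rewrite -(path_weight_rev w b s) s_last pi_w_le_shortest ?(is_walk_rev sym_e) //.
by rewrite size_rev size_belast size_s (dist_sC conn_e).
Qed.

Lemma pi_w_triangle_geodesic x y z :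
  x != y -> y != z -> x != z -> dist_s e x z = (dist_s e x y + dist_s e y z)%N ->
  pi_w e w x z <= pi_w e w x y + pi_w e w y z.
Proof.
move=> neq_xy neq_yz neq_xz geodesic.
have [s1 [walk_s1 size_s1] ->] := pi_w_attained neq_xy.
have [s2 [walk_s2 size_s2] ->] := pi_w_attained neq_yz.
have s1_last : last x s1 = y by case/andP: walk_s1 => _ /eqP.
apply: le_trans (pi_w_le_shortest neq_xz (is_walk_cat walk_s1 walk_s2) _) _.
  by rewrite size_cat size_s1 size_s2 geodesic.
rewrite path_weight_cat s1_last div_addr1M_le // (path_weight_ge0 w_ge0) //.
  by case/andP: walk_s1.
by case/andP: walk_s2.
Qed.

Lemma d_pi_ge0 x y : 0 <= d_pi e w x y.
Proof. by rewrite addr_ge0 ?pi_w_ge0. Qed.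

Lemma d_pixx x : d_pi e w x x = 0.
Proof. by rewrite /d_pi /pi_w eqxx dist_ss addr0. Qed.

Lemma d_pi_eq0 x y : d_pi e w x y = 0 <-> x = y.
Proof.
split=> [|->]; last exact: d_pixx.
move/eqP; rewrite paddr_eq0 ?pi_w_ge0 // pnatr_eq0 => /andP[/eqP dist0 _].
exact: dist_s_eq0 conn_e _ _ dist0.
Qed.

Lemma d_piC x y : symmetric e -> d_pi e w x y = d_pi e w y x.
Proof. by move=> sym_e; rewrite /d_pi (dist_sC conn_e) // pi_wC. Qed.

Lemma d_pi_triangle x y z : d_pi e w x z <= d_pi e w x y + d_pi e w y z.
Proof.
have [<-|neq_xz] := eqVneq x z; first by rewrite d_pixx addr_ge0 ?d_pi_ge0.
have [<-|neq_xy] := eqVneq x y; first by rewrite d_pixx add0r.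
have [<-|neq_yz] := eqVneq y z; first by rewrite d_pixx addr0.
have [s1 walk_s1 size_s1] := shortest_walk_exists conn_e x y.
have [s2 walk_s2 size_s2] := shortest_walk_exists conn_e y z.
have := dist_s_le (is_walk_cat walk_s1 walk_s2).
rewrite size_cat size_s1 size_s2 leq_eqVlt => /orP[/eqP geodesic | shortcut].
  rewrite /d_pi geodesic natrD addrACA lerD2l.
  exact: pi_w_triangle_geodesic.
have := pi_w_le1 x z; have := pi_w_ge0 x y; have := pi_w_ge0 y z.
rewrite /d_pi -(ler_nat R) natrD in shortcut *; lra.
Qed.

End PathMetric.

Theorem theorem3 (T : finType) (e : rel T) (R : realFieldType)
    (w : {set T} -> R)
    (Hsimple : simple_graph e) (Hconn : connected_graph e)
    (Hw : forall x y : T, e x y -> 0 <= w [set x; y]) :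
  is_metric (d_pi e w).
Proof.
have [_ sym_e] := Hsimple.
split.
- exact: d_pi_ge0 Hw.
- exact: d_pi_eq0 Hw Hconn.
- by move=> x y; apply: d_piC.
- exact: d_pi_triangle Hw Hconn.
Qed.
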